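(* Let $n\ge2$, $r\ge1$, let $V_1,\dots,V_r\in\mathrm{Mat}(n,\mathbb{C})$ satisfy $\operatorname{tr}(V_s^*V_m)=\delta_{sm}$, and define $$P_{\mathcal T}=\sum_{s=1}^r\sum_{a,b,c,d=1}^n (V_s)_{ab}(\bar V_s)_{cd}\,E^{(n)}_{ac}\otimes E^{(n)}_{bd},\qquad W_{\mathcal T}=\sum_{s,m=1}^r E^{(r)}_{sm}\otimes V_m\bar V_s,\qquad A_{\mathcal T}=W_{\mathcal T}W_{\mathcal T}^*.$$ Let $Q>0$ be real and write $P_1=P_{\mathcal T}\otimes I_n$, $P_2=I_n\otimes P_{\mathcal T}$. (a) $P_{\mathcal T}$ is a nonzero solution of $P^*=P$, $P^2=P$, $Q^2P_1P_2P_1=P_1$, $Q^2P_2P_1P_2=P_2$ if and only if $QW_{\mathcal T}$ is a unitary matrix, equivalently if and only if $Q^2A_{\mathcal T}$ is the identity matrix. (b) $P_{\mathcal T}$ is a nontrivial solution of $P^*=P$, $P^2=P$, $Q^2(P_1P_2P_1-P_2P_1P_2)=P_1-P_2$ that is not of Temperley–Lieb type if and only if $Q>1$ and the set of eigenvalues of $A_{\mathcal T}$ is exactly $\{1,Q^{-2}\}$.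
   Context: $E^{(p)}_{ab}\in\mathrm{Mat}(p,\mathbb{C})$ is the matrix unit with $(E^{(p)}_{ab})_{ij}=\delta_{ai}\delta_{bj}$; $\bar V$ is entrywise complex conjugate, $V^*$ conjugate transpose; $\otimes$ is the Kronecker product. A solution $P$ of $P^*=P$, $P^2=P$, $Q^2(P_1P_2P_1-P_2P_1P_2)=P_1-P_2$ is trivial if $P=0$ or $P=I_n\otimes I_n$, nontrivial otherwise; it is of Temperley–Lieb type if moreover $Q^2P_1P_2P_1=P_1$ and $Q^2P_2P_1P_2=P_2$. *)

(* Complex numbers are modelled as R[i] = complex R for an
   arbitrary real closed field R (for R = the reals this is C). *)
From HB Require Import structures.
From mathcomp Require Import all_boot all_order all_algebra.
From mathcomp Require Import complex mxtens.
Set Implicit Arguments. Unset Strict Implicit. Unset Printing Implicit Defensive.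
Import Order.TTheory GRing.Theory Num.Theory.
Local Open Scope ring_scope.

Definition mxconj (C : numClosedFieldType) m n (V : 'M[C]_(m, n)) : 'M[C]_(m, n) :=
  map_mx (fun x : C => x^*) V.
Definition adj (C : numClosedFieldType) m n (V : 'M[C]_(m, n)) : 'M[C]_(n, m) :=
  (mxconj V)^T.

Definition unitary (C : numClosedFieldType) k (U : 'M[C]_k) : Prop :=
  U *m adj U = 1%:M /\ adj U *m U = 1%:M.

Definition PT (C : numClosedFieldType) n r (V : 'I_r -> 'M[C]_n) : 'M[C]_(n * n) :=
  \sum_(s < r) \sum_(a < n) \sum_(b < n) \sum_(c < n) \sum_(d < n)
     (V s a b * (V s c d)^*) *: (delta_mx a c *t delta_mx b d).

Definition WT (C : numClosedFieldType) n r (V : 'I_r -> 'M[C]_n) : 'M[C]_(r * n) :=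
  \sum_(s < r) \sum_(m < r) (delta_mx s m *t (V m *m mxconj (V s))).

Definition AT (C : numClosedFieldType) n r (V : 'I_r -> 'M[C]_n) : 'M[C]_(r * n) :=
  WT V *m adj (WT V).

Definition P1 (C : numClosedFieldType) n (P : 'M[C]_(n * n)) : 'M[C]_(n * n * n) :=
  P *t (1%:M : 'M[C]_n).
Definition P2 (C : numClosedFieldType) n (P : 'M[C]_(n * n)) : 'M[C]_(n * n * n) :=
  castmx (mulnA n n n, mulnA n n n) ((1%:M : 'M[C]_n) *t P).

Definition selfadj_idem (C : numClosedFieldType) k (P : 'M[C]_k) : Prop :=
  adj P = P /\ P *m P = P.

Definition TL_rel (C : numClosedFieldType) n (Q : C) (P : 'M[C]_(n * n)) : Prop :=
  Q ^+ 2 *: (P1 P *m P2 P *m P1 P) = P1 P /\ Q ^+ 2 *: (P2 P *m P1 P *m P2 P) = P2 P.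

Definition main_rel (C : numClosedFieldType) n (Q : C) (P : 'M[C]_(n * n)) : Prop :=
  Q ^+ 2 *: (P1 P *m P2 P *m P1 P - P2 P *m P1 P *m P2 P) = P1 P - P2 P.

Definition trivial_sol (C : numClosedFieldType) k (P : 'M[C]_k) : Prop :=
  P = 0 \/ P = 1%:M.

From HB Require Import structures.
From mathcomp Require Import all_boot all_order all_algebra.
From mathcomp Require Import complex mxtens.
Set Implicit Arguments. Unset Strict Implicit. Unset Printing Implicit Defensive.
Import Order.TTheory GRing.Theory Num.Theory.
Local Open Scope ring_scope.

(* Stacking the vectorised V_s as the columns of an isometry B gives P_T = B B^*,
   and then P_1 = J_1 J_1^*, P_2 = J_2 J_2^* for two isometries J_1, J_2 from
   C^(rn) to C^(n^3) whose Gram block J_1^* J_2 is exactly W_T^*.  Compressing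
   by J_1 and J_2 turns the relations on P_1, P_2 into relations on
   X = W_T^* W_T and Y = A_T = W_T W_T^*: the Temperley-Lieb relations become
   Q^2 X = Q^2 Y = 1, and the braid-like relation becomes (M - 1)(Q^2 M - 1) = 0
   for M = X, Y, which for the Hermitian Y means that its spectrum lies in
   {1, Q^-2}.  Moreover P_T is trivial iff P_1 = P_2 iff Y = 1, and Y = K^* K
   for the contraction K = J_1^* J_2, so its eigenvalues are at most 1. *)

Section Eigenvalues.
Variable F : fieldType.

Lemma eigenvalue_mulmx_eq0 m k (A : 'M[F]_k) (B : 'M[F]_(m, k)) a :
  B != 0 -> B *m (A - a%:M) = 0 -> eigenvalue A a.
Proof.
move=> Bnz BA0; apply: contraNneq Bnz => ker0.
by rewrite -submx0 -ker0; apply/sub_kermxP.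
Qed.

Lemma eigenvalue_scalar k (d a : F) : eigenvalue (d%:M : 'M_k) a -> a = d.
Proof.
case/eigenvalueP => v; rewrite mul_mx_scalar => /eqP.
by rewrite -subr_eq0 -scalerBl scaler_eq0 subr_eq0 => /orP[/eqP-> | ->].
Qed.

Lemma eigenvalue0 k (A : 'M[F]_k) : eigenvalue A 0 = (A \notin unitmx).
Proof. by rewrite /eigenvalue /eigenspace raddf0 subr0 kermx_eq0 row_free_unit. Qed.

End Eigenvalues.

Section TensorIndex.
Variables (R : pzRingType) (m p : nat).

Lemma sum_mxtens_index (U : nmodType) (F : 'I_(m * p) -> U) :
  \sum_x F x = \sum_i \sum_j F (mxtens_index (i, j)).
Proof.
rewrite pair_big /= (reindex (@mxtens_index m p)) /=; first by apply: eq_bigr => -[].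
by exists (@mxtens_unindex m p) => x _; rewrite ?mxtens_indexK ?mxtens_unindexK.
Qed.

Lemma mxtens_index_eq (x a : 'I_m) (y b : 'I_p) :
  (mxtens_index (x, y) == mxtens_index (a, b)) = (x == a) && (y == b).
Proof. by rewrite (can_eq (@mxtens_indexK m p)) xpair_eqE. Qed.

Lemma tens_delta_mx (a c : 'I_m) (b d : 'I_p) :
  delta_mx a c *t delta_mx b d =
  delta_mx (mxtens_index (a, b)) (mxtens_index (c, d)) :> 'M[R]_(m * p).
Proof.
apply/matrixP => x y.
case: (mxtens_indexP x) => x1 x2; case: (mxtens_indexP y) => y1 y2.
rewrite tensmxE !mxE !mxtens_index_eq -natrM mulnb.
by case: (x1 == a); case: (y1 == c); case: (x2 == b); case: (y2 == d).
Qed.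

Lemma sum_tens_delta_mx (G : 'I_m -> 'I_p -> 'I_m -> 'I_p -> R) :
  \sum_a \sum_b \sum_c \sum_d G a b c d *: (delta_mx a c *t delta_mx b d) =
  \matrix_(x, y) G (mxtens_unindex x).1 (mxtens_unindex x).2
                   (mxtens_unindex y).1 (mxtens_unindex y).2 :> 'M[R]_(m * p).
Proof.
rewrite [RHS]matrix_sum_delta sum_mxtens_index; apply: eq_bigr => a _.
apply: eq_bigr => b _; rewrite sum_mxtens_index; apply: eq_bigr => c _.
by apply: eq_bigr => d _; rewrite mxE !mxtens_indexK tens_delta_mx.
Qed.

Lemma tens1mx1 : 1%:M *t 1%:M = 1%:M :> 'M[R]_(m * p).
Proof.
apply/matrixP => x y.
case: (mxtens_indexP x) => x1 x2; case: (mxtens_indexP y) => y1 y2.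
by rewrite tensmxE !mxE mxtens_index_eq -natrM mulnb.
Qed.

End TensorIndex.

Section Adjoint.
Variable C : numClosedFieldType.

Lemma adjE m p (A : 'M[C]_(m, p)) i j : adj A i j = (A j i)^*.
Proof. by rewrite !mxE. Qed.

Lemma adjK m p (A : 'M[C]_(m, p)) : adj (adj A) = A.
Proof. by apply/matrixP=> i j; rewrite !adjE conjCK. Qed.

Lemma adjM m p k (A : 'M[C]_(m, p)) (B : 'M[C]_(p, k)) :
  adj (A *m B) = adj B *m adj A.
Proof.
apply/matrixP=> i j; rewrite !mxE rmorph_sum; apply: eq_bigr => l _.
by rewrite !mxE rmorphM mulrC.
Qed.

Lemma adjD m p (A B : 'M[C]_(m, p)) : adj (A + B) = adj A + adj B.
Proof. by apply/matrixP=> i j; rewrite !mxE rmorphD. Qed.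

Lemma adjN m p (A : 'M[C]_(m, p)) : adj (- A) = - adj A.
Proof. by apply/matrixP=> i j; rewrite !mxE rmorphN. Qed.

Lemma adjB m p (A B : 'M[C]_(m, p)) : adj (A - B) = adj A - adj B.
Proof. by rewrite adjD adjN. Qed.

Lemma adjZ m p a (A : 'M[C]_(m, p)) : adj (a *: A) = a^* *: adj A.
Proof. by apply/matrixP=> i j; rewrite !mxE rmorphM. Qed.

Lemma adj_scalar m a : adj (a%:M : 'M[C]_m) = a^*%:M.
Proof. by apply/matrixP=> i j; rewrite !mxE eq_sym rmorphMn. Qed.

Lemma adj0 m p : adj (0 : 'M[C]_(m, p)) = 0.
Proof. by apply/matrixP=> i j; rewrite !mxE rmorph0. Qed.

Lemma adj1 m : adj (1%:M : 'M[C]_m) = 1%:M.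
Proof. by rewrite adj_scalar conjC1. Qed.

Lemma adj_tens m p k l (A : 'M[C]_(m, p)) (B : 'M[C]_(k, l)) :
  adj (A *t B) = adj A *t adj B.
Proof. by rewrite /adj /mxconj map_mxT trmx_tens. Qed.

Lemma adjXn k (A : 'M[C]_k) e : adj (A ^+ e) = adj A ^+ e.
Proof.
elim: e => [|e IHe]; first by rewrite !expr0 adj1.
by rewrite exprS -mulmxE adjM IHe mulmxE -exprSr.
Qed.

Lemma adj_mulmx_eq0 m p (A : 'M[C]_(m, p)) : adj A *m A = 0 -> A = 0.
Proof.
move=> /matrixP AA0; apply/matrixP=> i j; move: (AA0 j j); rewrite !mxE.
under eq_bigr do rewrite adjE -normCKC.
move/eqP; rewrite psumr_eq0 => [/allP/(_ i)|l _]; last exact: exprn_ge0.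
by rewrite mem_index_enum => /(_ isT); rewrite sqrf_eq0 normr_eq0 => /eqP.
Qed.

Lemma hermitian_nilpotent k (G : 'M[C]_k) e :
  adj G = G -> G ^+ e.+1 = 0 -> G = 0.
Proof.
move=> hG; elim: e => [|e IHe]; first by rewrite expr1.
move=> Ge; apply: IHe; apply: adj_mulmx_eq0.
by rewrite adjXn hG mulmxE -exprD addSnnS addnC exprD Ge mul0r.
Qed.

Lemma hermitian_eigenvalues2 k (H : 'M[C]_k) a b :
  adj H = H -> a^* = a -> b^* = b ->
  (forall z, eigenvalue H z -> z = a \/ z = b) ->
  (H - a%:M) *m (H - b%:M) = 0.
Proof.
case: k H => [|k] H hH ra rb spec; first by apply/matrixP => -[].
(* every root of char_poly H is a or b, so char_poly H divides a power of
   (X - a)(X - b): by Cayley-Hamilton the Hermitian (H - a)(H - b) is nilpotent *)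
pose g := ('X - a%:P) * ('X - b%:P).
have gH p q : horner_mx H (('X - p%:P) * ('X - q%:P)) = (H - p%:M) *m (H - q%:M).
  by rewrite rmorphM !rmorphB /= horner_mx_X !horner_mx_C mulmxE.
have hG : adj ((H - a%:M) *m (H - b%:M)) = (H - a%:M) *m (H - b%:M).
  by rewrite adjM !adjB hH !adj_scalar ra rb -!gH mulrC.
have [rs charE] := closed_field_poly_normal (char_poly H).
rewrite (monicP (char_poly_monic H)) scale1r in charE.
have /dvdpP [p gE] : char_poly H %| g ^+ size rs.
  have : {in rs, forall z, z = a \/ z = b}.
    by move=> z; rewrite -root_prod_XsubC -charE -eigenvalue_root_char; apply: spec.
  rewrite charE; elim: rs {charE} => [|z rs IHrs] rs_ab; first by rewrite big_nil dvd1p.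
  rewrite big_cons exprS dvdp_mul ?IHrs // => [|y rs_y]; last first.
    by apply: rs_ab; rewrite inE rs_y orbT.
  by case: (rs_ab z (mem_head z rs)) => ->; rewrite ?dvdp_mulIl ?dvdp_mulIr.
apply: (hermitian_nilpotent (e := size rs)) => //.
by rewrite exprS -mulmxE -gH -rmorphXn gE (rmorphM _ p) /=
  Cayley_Hamilton mulr0 mulmx0.
Qed.

Lemma mulmx_adj_ge0 m p (A : 'M[C]_(m, p)) i : 0 <= (A *m adj A) i i.
Proof.
rewrite mxE; apply: sumr_ge0 => l _.
by rewrite adjE -normCK exprn_ge0.
Qed.

Lemma rV_mulmx_adj_gt0 p (v : 'rV[C]_p) : v != 0 -> 0 < (v *m adj v) 0 0.
Proof.
move=> vnz; rewrite lt_def mulmx_adj_ge0 andbT; apply: contraNneq vnz => v0.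
have : adj v = 0.
  by apply: adj_mulmx_eq0; apply/matrixP => i j; rewrite adjK !ord1 v0 mxE.
by move/(congr1 (@adj C _ _)); rewrite adjK adj0 => ->.
Qed.

Lemma projection_quadform_le N (P : 'M[C]_N) (w : 'rV[C]_N) :
  adj P = P -> P *m P = P -> (w *m P *m adj w) 0 0 <= (w *m adj w) 0 0.
Proof.
move=> hP iP.
have quadE M : adj M = M -> M *m M = M -> w *m M *m adj w = w *m M *m adj (w *m M).
  by move=> hM iM; rewrite adjM hM !mulmxA -(mulmxA w M M) iM.
have hP' : adj (1%:M - P) = 1%:M - P by rewrite adjB adj1 hP.
have iP' : (1%:M - P) *m (1%:M - P) = 1%:M - P.
  by rewrite mulmxBl mul1mx mulmxBr mulmx1 iP subrr subr0.
rewrite -subr_ge0.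
have -> : (w *m adj w) 0 0 - (w *m P *m adj w) 0 0 = (w *m (1%:M - P) *m adj w) 0 0.
  by rewrite mulmxBr mulmx1 mulmxBl !mxE.
by rewrite (quadE _ hP' iP'); apply: mulmx_adj_ge0.
Qed.

Lemma eigenvalue_compression_le1 N k (J : 'M[C]_(N, k)) (P : 'M[C]_N) a :
  adj J *m J = 1%:M -> adj P = P -> P *m P = P ->
  eigenvalue (adj J *m P *m J) a -> a <= 1.
Proof.
move=> hJ hP iP /eigenvalueP [v vJPJ vnz].
have vv := rV_mulmx_adj_gt0 vnz.
rewrite -(ler_pM2r vv) mul1r.
have -> : a * (v *m adj v) 0 0 = (v *m (adj J *m P *m J) *m adj v) 0 0.
  by rewrite vJPJ -scalemxAl [in RHS]mxE.
have -> : v *m (adj J *m P *m J) *m adj v = v *m adj J *m P *m adj (v *m adj J).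
  by rewrite adjM adjK !mulmxA.
have -> : v *m adj v = v *m adj J *m adj (v *m adj J).
  by rewrite adjM adjK mulmxA -(mulmxA v) hJ mulmx1.
exact: projection_quadform_le.
Qed.

Lemma projection_eq N (A B : 'M[C]_N) :
  adj A = A -> adj B = B -> A *m A = A -> B *m B = B ->
  A *m B *m A = A -> B *m A *m B = B -> A = B.
Proof.
move=> hA hB iA iB ABA BAB.
have absorb (E F : 'M[C]_N) : adj E = E -> adj F = F -> E *m E = E -> F *m F = F ->
    E *m F *m E = E -> E = F *m E.
  move=> hE hF iE iF EFE; apply/eqP; rewrite -subr_eq0; apply/eqP/adj_mulmx_eq0.
  rewrite adjB adjM hE hF mulmxBl !mulmxBr !mulmxA -[E *m F *m F]mulmxA iF EFE iE.
  by rewrite !subrr.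
by rewrite -hA (absorb A B) // adjM hA hB -(absorb B A).
Qed.

Lemma hermitian_compress_eq0 N k (Z : 'M[C]_N) (J1 J2 : 'M[C]_(N, k)) M1 M2 :
  adj Z = Z -> Z = J1 *m M1 *m adj J1 - J2 *m M2 *m adj J2 ->
  adj J1 *m Z *m J1 = 0 -> adj J1 *m Z *m J2 = 0 ->
  adj J2 *m Z *m J1 = 0 -> adj J2 *m Z *m J2 = 0 -> Z = 0.
Proof.
move=> hZ Zdec Z11 Z12 Z21 Z22; apply: (hermitian_nilpotent (e := 2)) => //.
have sandwich (J J' : 'M[C]_(N, k)) M M' :
    J *m M *m adj J *m Z *m (J' *m M' *m adj J') =
    J *m M *m (adj J *m Z *m J') *m M' *m adj J' by rewrite !mulmxA.
rewrite exprS expr2 -!mulmxE mulmxA {1 3}Zdec mulmxBr !mulmxBl !sandwich.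
by rewrite Z11 Z12 Z21 Z22 !(mulmx0, mul0mx) subrr.
Qed.

End Adjoint.

Section Braid.
Variable C : numClosedFieldType.

Definition braid_poly k (c : C) (M : 'M[C]_k) := (M - 1%:M) *m (c *: M - 1%:M).

Definition braid_defect N (c : C) (A B : 'M[C]_N) :=
  c *: (A *m B *m A - B *m A *m B) - (A - B).

Lemma braid_defectC N c (A B : 'M[C]_N) :
  braid_defect c B A = - braid_defect c A B.
Proof.
by rewrite /braid_defect -[in LHS](opprB A B) -[in LHS](opprB (A *m B *m A))
  scalerN [RHS]opprD.
Qed.

Lemma adj_braid_defect N c (A B : 'M[C]_N) :
  c^* = c -> adj A = A -> adj B = B -> adj (braid_defect c A B) = braid_defect c A B.
Proof. by move=> hc hA hB; rewrite !(adjB, adjZ, adjM) hc hA hB !mulmxA. Qed.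

Lemma braid_polyC k c (M : 'M[C]_k) :
  braid_poly c M = (c *: M - 1%:M) *m (M - 1%:M).
Proof.
rewrite /braid_poly !mulmxBl !mulmxBr !mul1mx !mulmx1 -scalemxAl -scalemxAr.
by rewrite !opprD !opprK addrACA.
Qed.

Lemma braid_poly_eigen k c (M : 'M[C]_k) (v : 'rV[C]_k) a :
  v *m M = a *: v -> v *m braid_poly c M = ((a - 1) * (c * a - 1)) *: v.
Proof.
move=> vM.
have vM1 : v *m (M - 1%:M) = (a - 1) *: v by rewrite mulmxBr mulmx1 vM scalerBl scale1r.
have vcM1 : v *m (c *: M - 1%:M) = (c * a - 1) *: v.
  by rewrite mulmxBr mulmx1 -scalemxAr vM scalerA scalerBl scale1r.
by rewrite mulmxA vM1 -scalemxAl vcM1 scalerA.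
Qed.

Lemma braid_polyE k c (M : 'M[C]_k) :
  c != 0 -> braid_poly c M = c *: ((M - 1%:M) *m (M - c^-1%:M)).
Proof.
by move=> cnz; rewrite scalemxAr scalerBr scale_scalar_mx mulfV.
Qed.

Lemma braid_poly_intertwine k m c (A : 'M[C]_k) (B : 'M[C]_(k, m)) A' :
  A *m B = B *m A' -> braid_poly c A *m B = B *m braid_poly c A'.
Proof.
move=> AB.
have shift (d : C) : (d *: A - 1%:M) *m B = B *m (d *: A' - 1%:M).
  by rewrite mulmxBl mulmxBr mul1mx mulmx1 -scalemxAl -scalemxAr AB.
have := shift 1; rewrite !scale1r => shift1.
by rewrite -mulmxA shift mulmxA shift1 mulmxA.
Qed.

Lemma unitary_realZ k (W : 'M[C]_k) q : q^* = q ->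
  unitary (q *: W) <->
  q ^+ 2 *: (W *m adj W) = 1%:M /\ q ^+ 2 *: (adj W *m W) = 1%:M.
Proof.
by move=> hq; rewrite /unitary adjZ hq -!scalemxAl -!scalemxAr !scalerA -expr2.
Qed.

Lemma scale_mulmx1C k c (A B : 'M[C]_k) : c *: (A *m B) = 1%:M -> c *: (B *m A) = 1%:M.
Proof. by rewrite scalemxAl scalemxAr => /mulmx1C. Qed.

Section IsometryPair.
Variables (N k : nat) (J1 J2 : 'M[C]_(N, k)).
Hypothesis J1_iso : adj J1 *m J1 = 1%:M.

Local Notation P1 := (J1 *m adj J1).
Local Notation P2 := (J2 *m adj J2).
Local Notation K := (adj J1 *m J2).

Lemma compress_outer (M : 'M[C]_k) : adj J1 *m (J1 *m M *m adj J1) *m J1 = M.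
Proof. by rewrite !mulmxA J1_iso mul1mx -mulmxA J1_iso mulmx1. Qed.

Lemma projection_sandwichE :
  P1 *m P2 *m P1 = J1 *m (K *m adj K) *m adj J1.
Proof. by rewrite adjM adjK !mulmxA. Qed.

Lemma TL_compress c :
  c *: (P1 *m P2 *m P1) = P1 <-> c *: (K *m adj K) = 1%:M.
Proof.
rewrite projection_sandwichE scalemxAl scalemxAr.
split=> [TL|->]; last by rewrite mulmx1.
by rewrite -(compress_outer (c *: _)) TL !mulmxA J1_iso mul1mx.
Qed.

Lemma braid_defect_decomp c :
  braid_defect c P1 P2 =
  J1 *m (c *: (K *m adj K) - 1%:M) *m adj J1 -
  J2 *m (c *: (adj K *m K) - 1%:M) *m adj J2.
Proof.
rewrite /braid_defect !mulmxBr !mulmxBl !mulmx1 -!scalemxAr -!scalemxAl.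
rewrite !adjM !adjK !mulmxA scalerBr.
by rewrite !opprD !opprK addrACA.
Qed.

Lemma braid_defect_compress c :
  adj J1 *m braid_defect c P1 P2 *m J1 = - braid_poly c (K *m adj K).
Proof.
rewrite braid_defect_decomp mulmxBr mulmxBl compress_outer.
have -> : adj J1 *m (J2 *m (c *: (adj K *m K) - 1%:M) *m adj J2) *m J1 =
          c *: (K *m adj K *m (K *m adj K)) - K *m adj K.
  by rewrite !(mulmxBr, mulmxBl) mulmx1 -!(scalemxAr, scalemxAl) !adjM !adjK !mulmxA.
rewrite /braid_poly mulmxBl mulmxBr mul1mx mulmx1 -scalemxAr.
by rewrite [RHS]opprB.
Qed.

Hypothesis J2_iso : adj J2 *m J2 = 1%:M.

Lemma braid_defect_compress_cross c : adj J1 *m braid_defect c P1 P2 *m J2 = 0.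
Proof.
rewrite braid_defect_decomp mulmxBr mulmxBl.
have -> : adj J1 *m (J1 *m (c *: (K *m adj K) - 1%:M) *m adj J1) *m J2 =
          (c *: (K *m adj K) - 1%:M) *m K by rewrite !mulmxA J1_iso mul1mx.
have -> : adj J1 *m (J2 *m (c *: (adj K *m K) - 1%:M) *m adj J2) *m J2 =
          K *m (c *: (adj K *m K) - 1%:M) by rewrite -!mulmxA J2_iso mulmx1.
rewrite mulmxBl mulmxBr mul1mx mulmx1 -scalemxAl -scalemxAr.
by rewrite -[_ *m _ *m K]mulmxA subrr.
Qed.

End IsometryPair.

Section IsometryPairRelations.
Variables (N k : nat) (J1 J2 : 'M[C]_(N, k)).
Hypotheses (J1_iso : adj J1 *m J1 = 1%:M) (J2_iso : adj J2 *m J2 = 1%:M).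

Local Notation P1 := (J1 *m adj J1).
Local Notation P2 := (J2 *m adj J2).
Local Notation K := (adj J1 *m J2).

Let Gram_swap : adj K *m K = adj J2 *m J1 *m adj (adj J2 *m J1).
Proof. by rewrite !adjM !adjK. Qed.

Lemma TL_rel_compress c :
  c *: (P1 *m P2 *m P1) = P1 /\ c *: (P2 *m P1 *m P2) = P2 <->
  c *: (K *m adj K) = 1%:M /\ c *: (adj K *m K) = 1%:M.
Proof.
by rewrite Gram_swap; split=> -[/(TL_compress J2 J1_iso) ? /(TL_compress J1 J2_iso)].
Qed.

Lemma braid_rel_compress c : c^* = c ->
  c *: (P1 *m P2 *m P1 - P2 *m P1 *m P2) = P1 - P2 <->
  braid_poly c (K *m adj K) = 0 /\ braid_poly c (adj K *m K) = 0.
Proof.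
move=> hc; pose D := braid_defect c P1 P2.
apply: (@iff_trans _ (D = 0)).
  by rewrite /D /braid_defect; split=> [->|/subr0_eq //]; rewrite subrr.
have hD : adj D = D by rewrite adj_braid_defect // adjM adjK.
have D11 : adj J1 *m D *m J1 = - braid_poly c (K *m adj K).
  exact: braid_defect_compress.
have D12 : adj J1 *m D *m J2 = 0 by apply: braid_defect_compress_cross.
have D22 : adj J2 *m D *m J2 = braid_poly c (adj K *m K).
  rewrite -[D]opprK -braid_defectC mulmxN mulNmx braid_defect_compress //.
  by rewrite opprK Gram_swap.
split=> [D0|[gX gY]].
  split; [apply: oppr_inj; rewrite -D11 | rewrite -D22];
    by rewrite D0 mulmx0 mul0mx ?oppr0.
apply: (hermitian_compress_eq0 hD (braid_defect_decomp _ _ _)) => //.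
- by rewrite D11 gX oppr0.
- by rewrite -hD -[J1]adjK -!adjM mulmxA D12 adj0.
- by rewrite D22.
Qed.

Lemma projection_eq_iff : P1 = P2 <-> adj K *m K = 1%:M.
Proof.
have hP (M : 'M[C]_(N, k)) : adj (M *m adj M) = M *m adj M by rewrite adjM adjK.
have iP (M : 'M[C]_(N, k)) : adj M *m M = 1%:M -> M *m adj M *m (M *m adj M) = M *m adj M.
  by move=> hM; rewrite mulmxA -(mulmxA M) hM mulmx1.
split=> [P12|Y1].
  by rewrite adjM adjK mulmxA -(mulmxA _ J1) P12 !mulmxA J2_iso mul1mx J2_iso.
apply: projection_eq; rewrite ?hP ?iP //.
  by rewrite projection_sandwichE (mulmx1C Y1) mulmx1.
have -> : P2 *m P1 *m P2 = J2 *m (adj K *m K) *m adj J2 by rewrite adjM adjK !mulmxA.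
by rewrite Y1 mulmx1.
Qed.

Lemma eigenvalue_Gram_le1 a : eigenvalue (adj K *m K) a -> a <= 1.
Proof.
have hP1 : adj P1 = P1 by rewrite adjM adjK.
have iP1 : P1 *m P1 = P1 by rewrite mulmxA -(mulmxA J1) J1_iso mulmx1.
move=> ev; apply: (eigenvalue_compression_le1 J2_iso hP1 iP1).
by move: ev; rewrite adjM adjK !mulmxA.
Qed.

End IsometryPairRelations.

Section BraidSpectrum.
Variables (k : nat) (W : 'M[C]_k) (c : C).
Hypothesis c_gt0 : 0 < c.

Local Notation X := (adj W *m W).
Local Notation Y := (W *m adj W).

Let c_neq0 : c != 0. Proof. by rewrite gt_eqF. Qed.
Let hY : adj Y = Y. Proof. by rewrite adjM adjK. Qed.

Lemma braid_spectrum_of_rel :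
  (forall a, eigenvalue Y a -> a <= 1) ->
  braid_poly c Y = 0 -> c *: Y <> 1%:M -> Y <> 1%:M ->
  1 < c /\ (forall a, eigenvalue Y a <-> a = 1 \/ a = c^-1).
Proof.
move=> le1 gY cY_neq1 Y_neq1.
have spec a : eigenvalue Y a -> a = 1 \/ a = c^-1.
  case/eigenvalueP => v vY vnz; move: (braid_poly_eigen c vY).
  rewrite gY mulmx0 => /esym/eqP; rewrite scaler_eq0 (negbTE vnz) orbF.
  rewrite mulf_eq0 !subr_eq0 => /orP[/eqP-> | /eqP ca1]; [by left | right].
  by rewrite -[a](mulKf c_neq0) ca1 mulr1.
have ev1 : eigenvalue Y 1.
  apply: (eigenvalue_mulmx_eq0 (B := c *: Y - 1%:M)); last by rewrite -braid_polyC.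
  by apply: contra_not_neq cY_neq1 => /eqP; rewrite subr_eq0 => /eqP.
have evc : eigenvalue Y c^-1.
  apply: (eigenvalue_mulmx_eq0 (B := Y - 1%:M)).
    by apply: contra_not_neq Y_neq1 => /eqP; rewrite subr_eq0 => /eqP.
  by move/eqP: gY; rewrite braid_polyE // scaler_eq0 (negbTE c_neq0) => /eqP.
split; last by move=> a; split=> [/spec // | [] ->].
have c_ge1 : 1 <= c by rewrite -invf_le1 // le1.
rewrite lt_def c_ge1 andbT; apply/eqP => c1; apply: Y_neq1; apply/eqP.
rewrite -subr_eq0; apply/eqP/(hermitian_nilpotent (e := 1)).
  by rewrite adjB adj1 hY.
by move: gY; rewrite /braid_poly c1 scale1r expr2 mulmxE.
Qed.

Lemma braid_rel_of_spectrum :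
  1 < c -> (forall a, eigenvalue Y a <-> a = 1 \/ a = c^-1) ->
  [/\ braid_poly c X = 0, braid_poly c Y = 0, c *: Y <> 1%:M & Y <> 1%:M].
Proof.
move=> c_gt1 spec.
have Y_nscalar d : Y <> d%:M.
  move=> Yd.
  have /eigenvalue_scalar ev1 : eigenvalue (d%:M : 'M_k) 1 by rewrite -Yd spec; left.
  have /eigenvalue_scalar evc : eigenvalue (d%:M : 'M_k) c^-1.
    by rewrite -Yd spec; right.
  by move: c_gt1; rewrite -[c]invrK evc -ev1 invr1 ltxx.
have gY : braid_poly c Y = 0.
  have hci : (c^-1)^* = c^-1 by apply/conj_Creal/gtr0_real; rewrite invr_gt0.
  rewrite braid_polyE // (hermitian_eigenvalues2 hY (conjC1 _) hci) ?scaler0 //.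
  by move=> a /spec.
have W_unit : adj W \in unitmx.
  have : ~~ eigenvalue Y 0.
    by apply/negP => /spec [] /eqP; rewrite eq_sym ?oner_eq0 // invr_eq0 (negbTE c_neq0).
  by rewrite eigenvalue0 negbK unitmx_mul => /andP[].
split=> //.
  have := braid_poly_intertwine c (esym (mulmxA (adj W) W (adj W))).
  by rewrite gY mulmx0 => /(canRL (mulmxK W_unit)); rewrite mul0mx.
move=> cY1; apply: (Y_nscalar c^-1); rewrite -[Y]scale1r -(mulVf c_neq0) -scalerA cY1.
by rewrite scale_scalar_mx mulr1.
Qed.

End BraidSpectrum.

End Braid.

Section TensorLegs.
Variables (C : numClosedFieldType) (n : nat).

Definition tens3_index (a b e : 'I_n) : 'I_(n * n * n) :=
  mxtens_index (mxtens_index (a, b), e).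

Lemma tens3_indexP (x : 'I_(n * n * n)) : exists a b e, x = tens3_index a b e.
Proof.
case: (mxtens_indexP x) => ab e; case: (mxtens_indexP ab) => a b.
by exists a, b, e.
Qed.

Lemma sum_tens3_index (F : 'I_(n * n * n) -> C) :
  \sum_x F x = \sum_a \sum_b \sum_e F (tens3_index a b e).
Proof. by rewrite !sum_mxtens_index. Qed.

Lemma P1E (P : 'M[C]_(n * n)) a b e c d f :
  P1 P (tens3_index a b e) (tens3_index c d f) =
  P (mxtens_index (a, b)) (mxtens_index (c, d)) * (e == f)%:R.
Proof. by rewrite tensmxE mxE. Qed.

Lemma P2E (P : 'M[C]_(n * n)) a b e c d f :
  P2 P (tens3_index a b e) (tens3_index c d f) =
  (a == c)%:R * P (mxtens_index (b, e)) (mxtens_index (d, f)).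
Proof.
have castE a' b' e' : cast_ord (esym (mulnA n n n)) (tens3_index a' b' e') =
    mxtens_index (a', mxtens_index (b', e')).
  by apply: val_inj => /=; rewrite mulnDl -mulnA addnA.
by rewrite castmxE /= !castE tensmxE mxE.
Qed.

Lemma P1_1 : P1 (1%:M : 'M[C]_(n * n)) = 1%:M.
Proof. exact: tens1mx1. Qed.

Lemma P2_1 : P2 (1%:M : 'M[C]_(n * n)) = 1%:M.
Proof.
apply/matrixP => x y; rewrite /P2 tens1mx1 castmxE !mxE.
by rewrite (inj_eq (@cast_ord_inj _ _ _)).
Qed.

Lemma P1_eq_P2_scalar (P : 'M[C]_(n * n)) (z : 'I_n) : P1 P = P2 P ->
  P = (P (mxtens_index (z, z)) (mxtens_index (z, z)))%:M.
Proof.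
move=> P12.
have Pz a b c d : P (mxtens_index (a, b)) (mxtens_index (c, d)) =
    (a == c)%:R * P (mxtens_index (b, z)) (mxtens_index (d, z)).
  by rewrite -P2E -P12 P1E eqxx mulr1.
apply/matrixP => x y.
case: (mxtens_indexP x) => a b; case: (mxtens_indexP y) => c d.
rewrite Pz (Pz b) !mxE mxtens_index_eq.
by case: (a == c); case: (b == d); rewrite ?mul1r ?mul0r ?mulr1n ?mulr0n.
Qed.

Lemma trivial_solE (P : 'M[C]_(n * n)) : (0 < n)%N -> P *m P = P -> P <> 0 ->
  trivial_sol P <-> P1 P = P2 P.
Proof.
move=> n_gt0 iP P_neq0; split=> [[//|->]|]; first by rewrite P1_1 P2_1.
move/(P1_eq_P2_scalar (Ordinal n_gt0)); set l := P _ _ => Pl.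
have ll : l * l = l.
  move/matrixP/(_ (mxtens_index (Ordinal n_gt0, Ordinal n_gt0))
                  (mxtens_index (Ordinal n_gt0, Ordinal n_gt0))): iP.
  by rewrite Pl -scalar_mxM !mxE eqxx !mulr1n.
have /eqP : l * (l - 1) = 0 by rewrite mulrBr mulr1 ll subrr.
rewrite mulf_eq0 subr_eq0 => /orP[/eqP l0 | /eqP l1]; last by right; rewrite Pl l1.
by case: P_neq0; rewrite Pl l0 raddf0.
Qed.

End TensorLegs.

Section Vectorisation.
Variables (C : numClosedFieldType) (n r : nat) (V : 'I_r -> 'M[C]_n).

Definition vec_stack : 'M[C]_(n * n, r) :=
  \matrix_(x, s) V s (mxtens_unindex x).1 (mxtens_unindex x).2.

Lemma vec_stackE a b s : vec_stack (mxtens_index (a, b)) s = V s a b.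
Proof. by rewrite mxE mxtens_indexK. Qed.

Lemma PT_vec_stack : PT V = vec_stack *m adj vec_stack.
Proof.
rewrite /PT; under eq_bigr do rewrite sum_tens_delta_mx.
by apply/matrixP => x y; rewrite summxE !mxE; apply: eq_bigr => s _; rewrite !mxE.
Qed.

Hypothesis V_orthonormal : forall s m, \tr (adj (V s) *m V m) = (s == m)%:R.

Lemma V_dot s m : \sum_a \sum_b (V s a b)^* * V m a b = (s == m)%:R.
Proof.
rewrite -V_orthonormal exchange_big; apply: eq_bigr => b _.
by rewrite mxE; apply: eq_bigr => a _; rewrite adjE.
Qed.

Lemma vec_stack_iso : adj vec_stack *m vec_stack = 1%:M.
Proof.
apply/matrixP => s m; rewrite !mxE -V_dot sum_mxtens_index.
by apply: eq_bigr => a _; apply: eq_bigr => b _; rewrite adjE !vec_stackE.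
Qed.

Lemma PT_selfadj_idem : selfadj_idem (PT V).
Proof.
rewrite /selfadj_idem PT_vec_stack adjM adjK; split=> //.
by rewrite mulmxA -(mulmxA vec_stack) vec_stack_iso mulmx1.
Qed.

Lemma PT_neq0 : (0 < r)%N -> PT V <> 0.
Proof.
move=> r_gt0 /(congr1 (fun P => adj vec_stack *m P *m vec_stack)).
rewrite /= PT_vec_stack mulmxA vec_stack_iso mul1mx vec_stack_iso mulmx0 mul0mx.
by move/matrixP/(_ (Ordinal r_gt0) (Ordinal r_gt0))/eqP; rewrite !mxE eqxx oner_eq0.
Qed.

Definition P1_factor : 'M[C]_(n * n * n, r * n) := vec_stack *t 1%:M.

Lemma P1_factorE a b e s i :
  P1_factor (tens3_index a b e) (mxtens_index (s, i)) = V s a b * (e == i)%:R.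
Proof. by rewrite tensmxE vec_stackE mxE. Qed.

Lemma P1_PT : P1 (PT V) = P1_factor *m adj P1_factor.
Proof. by rewrite /P1 PT_vec_stack adj_tens adj1 tensmx_mul mulmx1. Qed.

Lemma P1_factor_iso : adj P1_factor *m P1_factor = 1%:M.
Proof. by rewrite adj_tens adj1 tensmx_mul vec_stack_iso mulmx1 tens1mx1. Qed.

(* I_n (x) vec_stack, with its column legs swapped so that they are indexed
   like those of P1_factor: the entry at ((a, b, e), (s, i)) is [a = i] (V_s)_be *)
Definition P2_factor : 'M[C]_(n * n * n, r * n) :=
  \matrix_(x, y)
    (((mxtens_unindex (mxtens_unindex x).1).1 == (mxtens_unindex y).2)%:R *
     V (mxtens_unindex y).1 (mxtens_unindex (mxtens_unindex x).1).2
       (mxtens_unindex x).2).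

Lemma P2_factorE a b e s i :
  P2_factor (tens3_index a b e) (mxtens_index (s, i)) = (a == i)%:R * V s b e.
Proof. by rewrite mxE !mxtens_indexK. Qed.

Lemma P2_PT : P2 (PT V) = P2_factor *m adj P2_factor.
Proof.
apply/matrixP => x y.
case: (tens3_indexP x) => a [b [e ->]]; case: (tens3_indexP y) => c [d [f ->]].
rewrite P2E PT_vec_stack !mxE sum_mxtens_index mulr_sumr; apply: eq_bigr => s _.
rewrite (big_only1 a) // => [|i ai _]; last first.
  by rewrite adjE !P2_factorE eq_sym (negbTE ai) !mul0r.
rewrite !adjE !P2_factorE !vec_stackE eqxx rmorphM rmorph_nat mul1r.
by rewrite mulrCA [c == a]eq_sym.
Qed.

Lemma P2_factor_iso : adj P2_factor *m P2_factor = 1%:M.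
Proof.
apply/matrixP => x y.
case: (mxtens_indexP x) => s i; case: (mxtens_indexP y) => m j.
rewrite !mxE mxtens_index_eq -mulnb natrM -V_dot sum_tens3_index mulr_suml.
rewrite (big_only1 i) // => [|a ai _]; last first.
  apply: big1 => b _; apply: big1 => e _.
  by rewrite adjE !P2_factorE rmorphM rmorph_nat (negbTE ai) !mul0r.
apply: eq_bigr => b _; rewrite mulr_suml; apply: eq_bigr => e _.
by rewrite adjE !P2_factorE eqxx rmorphM rmorph_nat !mul1r mulrCA mulrC.
Qed.

Lemma WTE s i m j :
  WT V (mxtens_index (m, j)) (mxtens_index (s, i)) = (V s *m mxconj (V m)) j i.
Proof.
rewrite summxE (big_only1 m) // => [|s' s'm _]; last first.
  by rewrite summxE big1 // => m' _; rewrite tensmxE mxE eq_sym (negbTE s'm) mul0r.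
rewrite summxE (big_only1 s) // => [|m' m's _]; last first.
  by rewrite tensmxE mxE eq_sym (negbTE m's) andbF mul0r.
by rewrite tensmxE mxE !eqxx mul1r.
Qed.

Lemma P12_factor : adj P1_factor *m P2_factor = adj (WT V).
Proof.
apply/matrixP => x y.
case: (mxtens_indexP x) => s i; case: (mxtens_indexP y) => m j.
rewrite adjE WTE !mxE rmorph_sum sum_tens3_index.
rewrite (big_only1 j) // => [|a aj _]; last first.
  apply: big1 => b _; apply: big1 => e _.
  by rewrite adjE P2_factorE (negbTE aj) mul0r mulr0.
apply: eq_bigr => b _; rewrite (big_only1 i) // => [|e ei _]; last first.
  by rewrite adjE P1_factorE rmorphM rmorph_nat (negbTE ei) mulr0 mul0r.
by rewrite adjE P1_factorE P2_factorE !mxE !eqxx mulr1 mul1r rmorphM /= conjCK.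
Qed.

End Vectorisation.

Lemma real_complex_sqr_gt1 (R : rcfType) (Q : R) : 0 < Q ->
  (1 < (real_complex R Q) ^+ 2) = (1 < Q).
Proof.
by move=> Q_gt0; rewrite -rmorphXn -(rmorph1 (real_complex R)) ltcR expr_gt1 // ltW.
Qed.

Theorem proposition6 (R : rcfType) (n r : nat) (V : 'I_r -> 'M[R[i]]_n) (Q : R) :
  (2 <= n)%N -> (1 <= r)%N ->
  (forall s m : 'I_r, \tr (adj (V s) *m V m) = (s == m)%:R) ->
  0 < Q ->
  let q : R[i] := real_complex R Q in
  let P := PT V in
  ((selfadj_idem P /\ P <> 0 /\ TL_rel q P) <-> unitary (q *: WT V))
  /\ (unitary (q *: WT V) <-> q ^+ 2 *: AT V = 1%:M)
  /\ ((selfadj_idem P /\ ~ trivial_sol P /\ main_rel q P /\ ~ TL_rel q P) <->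
      (1 < Q /\ (forall a : R[i], eigenvalue (AT V) a <-> (a = 1 \/ a = (q ^+ 2)^-1)))).
Proof.
move=> n_ge2 r_gt0 V_orth Q_gt0 q P.
have q_gt0 : 0 < q by rewrite ltcR.
have q2_gt0 : 0 < q ^+ 2 by rewrite exprn_gt0.
have [P_sa P_neq0] := (PT_selfadj_idem V_orth, PT_neq0 V_orth r_gt0).
have [iso1 iso2] := (P1_factor_iso V_orth, P2_factor_iso V_orth).
have TLE := TL_rel_compress iso1 iso2 (q ^+ 2).
have MRE := braid_rel_compress iso1 iso2 (conj_Creal (gtr0_real q2_gt0)).
have TRE := projection_eq_iff iso1 iso2.
have le1 := eigenvalue_Gram_le1 iso1 iso2.
rewrite P12_factor adjK -P1_PT -P2_PT in TLE MRE TRE le1.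
rewrite -(trivial_solE (ltnW n_ge2) P_sa.2 P_neq0) in TRE.
have UE := unitary_realZ (WT V) (conj_Creal (gtr0_real q_gt0)).
have YX := @scale_mulmx1C _ _ (q ^+ 2) (WT V) (adj (WT V)).
have spec_sub := braid_spectrum_of_rel q2_gt0 le1.
have spec_sup := @braid_rel_of_spectrum _ _ (WT V) _ q2_gt0.
rewrite /AT -(real_complex_sqr_gt1 Q_gt0) /TL_rel /main_rel /P.
split; [|split].
- split=> [[_ [_ /TLE [X1 Y1]]] | /UE [Y1 X1]]; first exact/UE.
  by split=> //; split=> //; apply/TLE.
- by split=> [/UE [] // | /[dup] /YX X1 Y1]; apply/UE.
split=> [[_ [ntriv [/MRE [_ gY] nTL]]] | [c_gt1 spec]].
  apply: spec_sub gY _ _ => [cY1 | Y1]; last exact/ntriv/TRE.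
  by apply: nTL; apply/TLE; split=> //; exact: YX.
case: (spec_sup c_gt1 spec) => gX gY cY_neq1 Y_neq1.
do !split=> //; [by move/TRE | exact/MRE | by case/TLE].
Qed.
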